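(* Let $G=(V,E)$ be a graph and let $\mathcal{M}$ be a nontrivial, unbounded graph matroid family with rank function $r$, dimensionality $d$, and threshold $t$. Suppose that $\mathcal{M}$ has the Lovász-Yemini property with constant $c$, i.e. every $c$-connected graph is $\mathcal{M}$-rigid. If $G$ is $(\max(t,c)+k)$-connected for some positive integer $k$, then $\mathcal{M}(G)$ is vertically $(k+1)$-connected.
   Context: All graphs are finite and simple and have no isolated vertices. A graph matroid family $\mathcal{M}$ assigns to every graph $G$ a matroid $\mathcal{M}(G)$ on $E(G)$ such that (i) every graph isomorphism $V(G)\to V(H)$ induces an isomorphism $\mathcal{M}(G)\to\mathcal{M}(H)$, and (ii) for every subgraph $H$ of $G$, $\mathcal{M}(H)$ is the restriction of $\mathcal{M}(G)$ to $E(H)$. $r(G)$ is the rank of $\mathcal{M}(G)$; $G$ is $\mathcal{M}$-rigid if $r(G)=r(K_{V(G)})$. $\mathcal{M}$ is nontrivial if some graph $G$ has $r(G)<|E(G)|$, unbounded if $r(K_n)$ is unbounded. An $\mathcal{M}$-circuit is a graph $C$ with $r(C)<|E(C)|$ and $r(C-e)=|E(C)|-1$ for all edges $e$. Dimensionality $d$: minimum over $\mathcal{M}$-circuits of (minimum degree $-1$); threshold $t$: minimum of $|V(C)|-1$ over $\mathcal{M}$-circuits $C$ of minimum degree $d+1$. For a matroid with rank function $r$ on ground set $E$ and positive integer $k$, a bipartition $(E_1,E_2)$ of $E$ is a vertical $k$-separation if $r(E_1),r(E_2)\ge k$ and $r(E_1)+r(E_2)\le r(E)+k-1$; the matroid is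 vertically $k$-connected if its rank is at least $k$ and it has no vertical $k'$-separation for any positive integer $k'<k$. *)

From mathcomp Require Import all_boot.
From mathcomp Require Import finmap.
Set Implicit Arguments. Unset Strict Implicit. Unset Printing Implicit Defensive.
Local Open Scope fset_scope.

(* An edge {u,v} is stored as the pair (u,v)
   with u < v.  A graph (finite, simple, no isolated vertices) is given by its
   finite edge set; its vertex set is the set of endpoints of its edges. *)
Definition edge := (nat * nat)%type.
Definition graph := {fset edge}.

Definition is_graph (G : graph) : Prop := forall e, e \in G -> e.1 < e.2.

Definition vertices (G : graph) : {fset nat} := \bigcup_(e <- G) [fset e.1; e.2].

Definition complete (V : {fset nat}) : graph := [fset p in V `*` V | p.1 < p.2].

Definition K (n : nat) : graph := complete [fset i | i in iota 0 n].

Definition emap (f : nat -> nat) (e : edge) : edge :=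
  (minn (f e.1) (f e.2), maxn (f e.1) (f e.2)).

Definition graph_iso (f : nat -> nat) (G H : graph) : Prop :=
  {in vertices G &, injective f} /\ [fset emap f e | e in G] = H.

Definition matroid_rank (E : {fset edge}) (r : {fset edge} -> nat) : Prop :=
  forall X Y, X `<=` E -> Y `<=` E ->
    [/\ r X <= #|` X|, (X `<=` Y -> r X <= r Y) &
        r (X `|` Y) + r (X `&` Y) <= r X + r Y].

(* A graph matroid family: rk G is the rank function of the matroid M(G)
   on E(G) (its values on subsets of E(G) are the only relevant ones). *)
Definition graph_matroid_family (rk : graph -> {fset edge} -> nat) : Prop :=
  [/\ (forall G, is_graph G -> matroid_rank G (rk G)),
      (forall G H f, is_graph G -> is_graph H -> graph_iso f G H ->
         forall X, X `<=` G -> rk H [fset emap f e | e in X] = rk G X) &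
      (forall G H, is_graph G -> H `<=` G ->
         forall X, X `<=` H -> rk H X = rk G X)].

Section Family.
Variable rk : graph -> {fset edge} -> nat.

Definition rnk (G : graph) : nat := rk G G.

Definition rigid (G : graph) : Prop := rnk G = rnk (complete (vertices G)).

Definition nontrivial : Prop := exists G, is_graph G /\ rnk G < #|` G|.

Definition unbounded : Prop := forall m, exists n, m < rnk (K n).

Definition circuit (C : graph) : Prop :=
  [/\ is_graph C, rnk C < #|` C| &
      forall e, e \in C -> rnk (C `\ e) = #|` C| - 1].

Definition deg (G : graph) (v : nat) : nat :=
  #|` [fset e in G | (e.1 == v) || (e.2 == v)]|.

Definition min_degree (G : graph) (m : nat) : Prop :=
  (exists2 v, v \in vertices G & deg G v = m) /\
  (forall v, v \in vertices G -> m <= deg G v).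

Definition dimensionality (d : nat) : Prop :=
  (exists C, circuit C /\ min_degree C d.+1) /\
  (forall C m, circuit C -> min_degree C m -> d.+1 <= m).

Definition threshold (d t : nat) : Prop :=
  (exists C, [/\ circuit C, min_degree C d.+1 & #|` vertices C| = t.+1]) /\
  (forall C, circuit C -> min_degree C d.+1 -> t.+1 <= #|` vertices C|).

Definition vertical_separation (G : graph) (k : nat) : Prop :=
  exists E1 E2 : {fset edge},
    [/\ E1 `|` E2 = G, E1 `&` E2 = fset0, k <= rk G E1, k <= rk G E2 &
        rk G E1 + rk G E2 <= rk G G + k - 1].

Definition vertically_connected (G : graph) (k : nat) : Prop :=
  k <= rk G G /\ forall k', 0 < k' -> k' < k -> ~ vertical_separation G k'.
End Family.

Definition adj (G : graph) (u v : nat) : bool := ((u, v) \in G) || ((v, u) \in G).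

Definition k_connected (G : graph) (k : nat) : Prop :=
  k < #|` vertices G| /\
  forall S : {fset nat}, S `<=` vertices G -> #|` S| < k ->
    forall u v, u \in vertices G `\` S -> v \in vertices G `\` S ->
      exists p : seq nat,
        path (fun x y => adj G x y && (y \notin S)) u p && (last u p == v).

Definition lovasz_yemini (rk : graph -> {fset edge} -> nat) (c : nat) : Prop :=
  forall G, is_graph G -> k_connected G c -> rigid rk G.

(* By symmetry the rank r(K_W) of a complete graph depends only on |W|, and the
   transpositions of V fixing a vertex v act transitively on the edges at v, so
   contracting K_(V-v) in M(K_V) leaves a uniform matroid on the star of v:
   adding star edges to K_(V-v) raises the rank by their number until it reaches
   r(K_V).  Unboundedness forces r(K_(V-v)) < r(K_V), since once adding a vertex
   fails to raise the rank no later vertex does; hence star edges are independent.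
   The Lovasz-Yemini property applied to K_(V-v) plus c star edges gives
   r(K_V) <= r(K_(V-v)) + c.

   Let (E1, E2) be a vertical j-separation of a (c+j)-connected graph G and let v
   be incident to both sides.  Each side E_i either has rank at least
   r(E_i - v) + deg_(E_i) v or gains the full increment r(K_V) - r(K_(V-v)) over
   E_i - v.  As deg v >= c + j and both G and G - v are rigid, the remainders
   (E1 - v, E2 - v) form a vertical j'-separation of G - v with j' < j, and
   induction on j yields a contradiction. *)

From mathcomp Require Import all_boot.
From mathcomp Require Import finmap.
From mathcomp Require Import zify.
Set Implicit Arguments. Unset Strict Implicit. Unset Printing Implicit Defensive.
Local Open Scope fset_scope.
Local Open Scope nat_scope.

(** * Rank functions *)

Section MatroidRank.
Variables (E : {fset edge}) (r : {fset edge} -> nat).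
Hypothesis r_matroid : matroid_rank E r.

Lemma rank_leq_card X : X `<=` E -> r X <= #|` X|.
Proof. by move=> hX; case: (r_matroid hX hX). Qed.

Lemma rankS X Y : Y `<=` E -> X `<=` Y -> r X <= r Y.
Proof.
by move=> hY hXY; case: (r_matroid (fsubset_trans hXY hY) hY) => _ /(_ hXY).
Qed.

Lemma rank_submod X Y : X `<=` E -> Y `<=` E -> r (X `|` Y) + r (X `&` Y) <= r X + r Y.
Proof. by move=> hX hY; case: (r_matroid hX hY). Qed.

Lemma rank0 : r fset0 = 0.
Proof. by apply/eqP; rewrite -leqn0 -(cardfs0 edge) rank_leq_card ?fsub0set. Qed.

Lemma rankU_leq X Y : X `<=` E -> Y `<=` E -> r (X `|` Y) <= r X + #|` Y|.
Proof. by move=> hX hY; have := rank_submod hX hY; have := rank_leq_card hY; lia. Qed.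

Lemma rankU_diminishing X Y Z : Y `<=` E -> Z `<=` E -> X `<=` Y ->
  r (Y `|` Z) + r X <= r (X `|` Z) + r Y.
Proof.
move=> hY hZ hXY; have hXZ : X `|` Z `<=` E by rewrite fsubUset (fsubset_trans hXY).
have := rank_submod hXZ hY.
rewrite -fsetUA [Z `|` Y]fsetUC fsetUA (fsetUidPr _ _ hXY).
have : r X <= r ((X `|` Z) `&` Y).
  by apply: rankS; rewrite ?fsubsetI ?fsubsetUl // (fsubset_trans (fsubsetIr _ _)).
lia.
Qed.

Lemma rank_spanned A Y : A `<=` E -> Y `<=` E ->
  (forall y, y \in Y -> r (A `|` [fset y]) = r A) -> r (A `|` Y) = r A.
Proof.
move=> hA; elim/fset1U_rect: Y => [|y Y _ IH] hY span; first by rewrite fsetU0.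
have [hy hY'] : [fset y] `<=` E /\ Y `<=` E by move: hY; rewrite fsubUset => /andP.
have hAY : A `|` Y `<=` E by rewrite fsubUset hA.
have rAY : r (A `|` Y) = r A.
  by apply: IH => // z zY; apply: span; rewrite in_fset1U zY orbT.
have -> : A `|` (y |` Y) = A `|` Y `|` [fset y] by rewrite [_ `|` [fset y]]fsetUC fsetUCA.
have := rankU_diminishing hAY hy (fsubsetUl A Y).
have hAYy : A `|` Y `|` [fset y] `<=` E by rewrite fsubUset hAY.
have := rankS hAYy (fsubset_trans (fsubsetUl A Y) (fsubsetUl _ [fset y])).
rewrite span ?fset1U1 // rAY; lia.
Qed.

Lemma rankU_redundant A Z : A `<=` E -> Z `<=` E -> r (A `|` Z) < r A + #|` Z| ->
  exists2 z, z \in Z & r (A `|` (Z `\ z)) = r (A `|` Z).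
Proof.
move=> hA; elim/fset1U_rect: Z => [|z Z zZ IH]; first by rewrite fsetU0 cardfs0 addn0 ltnn.
rewrite fsubUset fsub1set => /andP [zE hZ]; rewrite cardfsU1 zZ.
have hAZ : A `|` Z `<=` E by rewrite fsubUset hA.
have hz : [fset z] `<=` E by rewrite fsub1set.
have hAZz : A `|` Z `|` [fset z] `<=` E by rewrite fsubUset hAZ.
have UA1 B : A `|` (z |` B) = A `|` B `|` [fset z] by rewrite [_ `|` [fset z]]fsetUC fsetUCA.
have le_z := rankU_leq hAZ hz; have ge_z := rankS hAZz (fsubsetUl _ [fset z]).
rewrite UA1 cardfs1 in le_z *.
case: (eqVneq (r (A `|` Z `|` [fset z])) (r (A `|` Z))) => [same|grows] lt.
  by exists z; rewrite ?fset1U1 // fsetU1K // same.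
have [|w wZ span_w] := IH hZ; first by lia.
exists w; first exact: fset1Ur.
have wz : w != z by apply: contraNneq zZ => <-.
have -> : (z |` Z) `\ w = z |` (Z `\ w).
  by apply/fsetP => x; rewrite !inE; case: eqVneq => // ->; rewrite (negbTE wz).
have sub_w : A `|` (Z `\ w) `<=` A `|` Z by rewrite fsetUS ?fsubsetDl.
have := rankU_diminishing hAZ hz sub_w.
have := rankS hAZz (fsetSU [fset z] sub_w).
rewrite UA1 span_w; lia.
Qed.

End MatroidRank.

(** * Edges, stars and complete graphs *)

Definition mkedge (a b : nat) : edge := (minn a b, maxn a b).

Definition other (v : nat) (e : edge) : nat := if e.1 == v then e.2 else e.1.

Definition transp (p q x : nat) : nat := if x == p then q else if x == q then p else x.

Definition star (E : {fset edge}) v := [fset e in E | (e.1 == v) || (e.2 == v)].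

Definition del (E : {fset edge}) v := [fset e in E | (e.1 != v) && (e.2 != v)].

Definition spokes v (X : {fset nat}) : {fset edge} := [fset mkedge v x | x in X].

Lemma mkedgeC a b : mkedge a b = mkedge b a.
Proof. by rewrite /mkedge minnC maxnC. Qed.

Lemma emap_mkedge f a b : emap f (mkedge a b) = mkedge (f a) (f b).
Proof. by rewrite /emap /mkedge; case: leqP => //= _; rewrite minnC maxnC. Qed.

Lemma mkedge_ends v x y :
  ((y == (mkedge v x).1) || (y == (mkedge v x).2)) = (y == v) || (y == x).
Proof. by rewrite /mkedge; case: leqP => //= _; rewrite orbC. Qed.

Lemma mkedge_touch v x : ((mkedge v x).1 == v) || ((mkedge v x).2 == v).
Proof. by have := mkedge_ends v x v; rewrite eqxx ![v == _]eq_sym => ->. Qed.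

Lemma mkedgeK (e : edge) : e.1 < e.2 -> mkedge e.1 e.2 = e.
Proof.
by case: e => a b /= ab; rewrite /mkedge (minn_idPl (ltnW ab)) (maxn_idPr (ltnW ab)).
Qed.

Lemma other_mkedge v x : other v (mkedge v x) = x.
Proof. by rewrite /other /mkedge; case: leqP => /= h; case: eqVneq => //; lia. Qed.

Lemma mkedge_other v (e : edge) : e.1 < e.2 -> (e.1 == v) || (e.2 == v) ->
  mkedge v (other v e) = e.
Proof.
rewrite /other; case: eqVneq => [<- lt _|_ lt /eqP <-]; first exact: mkedgeK.
by rewrite mkedgeC mkedgeK.
Qed.

Lemma other_neq v (e : edge) : e.1 < e.2 -> other v e != v.
Proof. by move=> lt; rewrite /other; case: (eqVneq e.1 v) => [<-|]; rewrite ?(gtn_eqF lt). Qed.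

Lemma mkedge_inj v : injective (mkedge v).
Proof. by move=> x y exy; rewrite -(other_mkedge v x) exy other_mkedge. Qed.

Lemma mem_complete V e : (e \in complete V) = [&& e.1 \in V, e.2 \in V & e.1 < e.2].
Proof. by rewrite !inE andbA. Qed.

Lemma mkedge_complete V a b : (mkedge a b \in complete V) = [&& a \in V, b \in V & a != b].
Proof.
rewrite !inE /mkedge /=; case: (ltngtP a b) => [ab|ba|->].
- by rewrite ab !andbT.
- by rewrite ba !andbT andbC.
- by rewrite ltnn !andbF.
Qed.

Lemma is_graph_complete V : is_graph (complete V).
Proof. by move=> e; rewrite mem_complete => /and3P []. Qed.

Lemma is_graph_sub G H : is_graph G -> H `<=` G -> is_graph H.
Proof. by move=> hG /fsubsetP hH e /hH /hG. Qed.

Lemma completeS W V : W `<=` V -> complete W `<=` complete V.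
Proof.
by move=> /fsubsetP WV; apply/fsubsetP=> e; rewrite !mem_complete => /and3P [/WV -> /WV -> ->].
Qed.

Lemma mem_vertices G x :
  reflect (exists2 e, e \in G & (x == e.1) || (x == e.2)) (x \in vertices G).
Proof.
apply: (iffP (bigfcupP _ _ _ _)) => [[e /andP [eG _]]|[e eG]].
  by rewrite !inE; exists e.
by exists e; rewrite ?eG ?inE.
Qed.

Lemma vertices_sub G V : G `<=` complete V -> vertices G `<=` V.
Proof.
move=> /fsubsetP GV; apply/fsubsetP=> x /mem_vertices [e /GV].
by rewrite mem_complete => /and3P [e1 e2 _] /orP [] /eqP ->.
Qed.

Lemma ends_vertices G e : e \in G -> (e.1 \in vertices G) && (e.2 \in vertices G).
Proof. by move=> eG; apply/andP; split; apply/mem_vertices; exists e; rewrite ?eqxx ?orbT. Qed.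

Lemma sub_complete_vertices G : is_graph G -> G `<=` complete (vertices G).
Proof. by move=> hG; apply/fsubsetP=> e eG; rewrite mem_complete andbA ends_vertices ?hG. Qed.

Lemma imfset_complete f W : {in W &, injective f} ->
  [fset emap f e | e in complete W] = complete [fset f x | x in W].
Proof.
move=> f_inj; apply/fsetP=> e; apply/imfsetP/idP => [[e0 /= + ->]|].
  rewrite mem_complete /emap => /and3P [e1 e2 lt12]; rewrite -/(mkedge _ _) mkedge_complete.
  rewrite !in_imfset //=; apply: contraTneq lt12 => /f_inj eq12.
  by rewrite eq12 ?ltnn.
case: e => x y; rewrite mem_complete.
case/and3P=> [/imfsetP [a /= aW ->] /imfsetP [b /= bW ->] lt].
exists (mkedge a b); last by rewrite emap_mkedge (mkedgeK (e := (f a, f b))) //.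
by rewrite mkedge_complete aW bW; apply: contraTneq lt => ->; rewrite ltnn.
Qed.

Lemma transpK p q : involutive (transp p q).
Proof.
move=> x; rewrite /transp; case: (eqVneq x p) => [->|xp]; first by rewrite eqxx; case: eqP.
by case: (eqVneq x q) => [->|xq]; rewrite ?eqxx // (negbTE xp) (negbTE xq).
Qed.

Lemma transp_inj p q : injective (transp p q).
Proof. exact: inv_inj (transpK p q). Qed.

Lemma transpL p q : transp p q p = q.
Proof. by rewrite /transp eqxx. Qed.

Lemma transp_id p q x : x != p -> x != q -> transp p q x = x.
Proof. by rewrite /transp => /negbTE -> /negbTE ->. Qed.

Lemma imfset_transp V p q : p \in V -> q \in V -> [fset transp p q x | x in V] = V.
Proof.
move=> pV qV; have mem_transp x : (transp p q x \in V) = (x \in V).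
  rewrite /transp; case: (eqVneq x p) => [->|_]; first by rewrite pV qV.
  by case: (eqVneq x q) => [->|]; rewrite ?pV ?qV.
apply/fsetP=> x; apply/imfsetP/idP => [[y yV ->]|xV] /=; first by rewrite mem_transp.
by exists (transp p q x); rewrite ?transpK ?mem_transp.
Qed.

Lemma mem_star E v e : (e \in star E v) = (e \in E) && ((e.1 == v) || (e.2 == v)).
Proof. by rewrite !inE. Qed.

Lemma mem_del E v e : (e \in del E v) = (e \in E) && ((e.1 != v) && (e.2 != v)).
Proof. by rewrite !inE. Qed.

Lemma star_sub E v : star E v `<=` E.
Proof. by apply/fsubsetP=> e; rewrite mem_star => /andP []. Qed.

Lemma del_sub E v : del E v `<=` E.
Proof. by apply/fsubsetP=> e; rewrite mem_del => /andP []. Qed.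

Lemma starS E F v : E `<=` F -> star E v `<=` star F v.
Proof. by move=> /fsubsetP EF; apply/fsubsetP=> e; rewrite !mem_star => /andP [/EF -> ->]. Qed.

Lemma delS E F v : E `<=` F -> del E v `<=` del F v.
Proof. by move=> /fsubsetP EF; apply/fsubsetP=> e; rewrite !mem_del => /andP [/EF -> ->]. Qed.

Lemma fsetU_del_star E v : del E v `|` star E v = E.
Proof.
apply/fsetP=> e; rewrite in_fsetU mem_del mem_star.
by case: (e \in E); case: (e.1 == v); case: (e.2 == v).
Qed.

Lemma delU E F v : del (E `|` F) v = del E v `|` del F v.
Proof. by apply/fsetP=> e; rewrite in_fsetU !mem_del in_fsetU andb_orl. Qed.

Lemma delI E F v : del (E `&` F) v = del E v `&` del F v.
Proof.
apply/fsetP=> e; rewrite in_fsetI !mem_del in_fsetI.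
by case: (e \in E); case: (e \in F); case: (e.1 != v); case: (e.2 != v).
Qed.

Lemma starU E F v : star (E `|` F) v = star E v `|` star F v.
Proof. by apply/fsetP=> e; rewrite in_fsetU !mem_star in_fsetU andb_orl. Qed.

Lemma del0 v : del fset0 v = fset0.
Proof. by apply/fsetP=> e; rewrite mem_del in_fset0. Qed.

Lemma star_vertices E v : 0 < #|` star E v| -> v \in vertices E.
Proof.
rewrite cardfs_gt0 => /fset0Pn [e]; rewrite mem_star => /andP [eE ev].
by apply/mem_vertices; exists e; rewrite // ![v == _]eq_sym.
Qed.

Lemma del_complete V v : del (complete V) v = complete (V `\ v).
Proof.
apply/fsetP=> e; rewrite mem_del !mem_complete !in_fsetD1.
by case: (e.1 != v); case: (e.2 != v); rewrite /= ?andbF ?andbT.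
Qed.

Lemma card_spokes v X : #|` spokes v X| = #|` X|.
Proof. exact/card_imfset/mkedge_inj. Qed.

Lemma star_complete V v : v \in V -> star (complete V) v = spokes v (V `\ v).
Proof.
move=> vV; apply/fsetP=> e; rewrite mem_star; apply/andP/imfsetP => [[eV ev]|[x /= xV ->]].
  have lt := is_graph_complete eV; exists (other v e); last by rewrite mkedge_other.
  move: eV; rewrite mem_complete /other => /and3P [e1 e2 _].
  by case: eqVneq ev => [<- _|e1v _]; rewrite in_fsetD1 ?(gtn_eqF lt) ?e1v.
split; last exact: mkedge_touch.
by move: xV; rewrite in_fsetD1 mkedge_complete vV eq_sym => /andP [-> ->].
Qed.

(** * Connectivity *)

Lemma adjC G a b : adj G a b = adj G b a.
Proof. exact: orbC. Qed.

Lemma mkedge_adj G a b : mkedge a b \in G -> adj G a b.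
Proof. by rewrite /adj /mkedge; case: leqP => _ ->; rewrite ?orbT. Qed.

Lemma adj_mkedge G a b : is_graph G -> adj G a b -> mkedge a b \in G.
Proof.
move=> hG /orP [] abG; have /= lt := hG _ abG.
  by rewrite (mkedgeK (e := (a, b))).
by rewrite mkedgeC (mkedgeK (e := (b, a))).
Qed.

Lemma adj_vertices G a b : adj G a b -> a \in vertices G.
Proof. by move=> /orP [] /ends_vertices /andP []. Qed.

Lemma exists_other (T : choiceType) (A : {fset T}) a :
  1 < #|` A| -> exists2 b, b \in A & b != a.
Proof.
move=> A2; have : A `\ a != fset0 by rewrite -cardfs_gt0; rewrite (cardfsD1 a A) in A2; lia.
by case/fset0Pn=> b; rewrite in_fsetD1 => /andP [ba bA]; exists b.
Qed.

Lemma k_connectedW G k l : k_connected G k -> l <= k -> k_connected G l.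
Proof.
case=> Vk conn lk; split=> [|S SV Sl]; first exact: leq_ltn_trans lk Vk.
exact/conn/(leq_trans Sl lk).
Qed.

Lemma k_connected_neighbor G k S u w : k_connected G k -> S `<=` vertices G -> #|` S| < k ->
  u \in vertices G `\` S -> w \in vertices G `\` S -> u != w ->
  exists2 z, adj G u z & z \notin S.
Proof.
case=> _ conn SV Sk uS wS uw; have [p /andP [pth /eqP]] := conn S SV Sk u w uS wS.
case: p pth => [_ /= uw'|z p /= /andP [/andP [uz zS] _] _]; last by exists z.
by rewrite uw' eqxx in uw.
Qed.

Lemma k_connected_hub G k : k < #|` vertices G| ->
  (forall S, S `<=` vertices G -> #|` S| < k ->
     exists2 x, x \in vertices G `\` S &
       forall y, y \in vertices G `\` S -> y != x -> adj G x y) ->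
  k_connected G k.
Proof.
move=> Vk hub; split=> // S SV Sk u w uS wS.
have [x xS x_adj] := hub S SV Sk.
have [xS' uS' wS'] : [/\ x \notin S, u \notin S & w \notin S].
  by move: xS uS wS; rewrite !in_fsetD => /andP [-> _] /andP [-> _] /andP [-> _].
case: (eqVneq u w) => [<-|uw]; first by exists [::]; rewrite /= eqxx.
case: (eqVneq u x) => [ux|ux]; last case: (eqVneq w x) => [wx|wx].
- by exists [:: w]; rewrite /= eqxx wS' !andbT ux x_adj // -ux eq_sym.
- by exists [:: w]; rewrite /= eqxx wS' !andbT wx adjC x_adj.
- by exists [:: x; w]; rewrite /= eqxx xS' wS' !andbT adjC !x_adj.
Qed.

Lemma k_connected_deg G k v :
  is_graph G -> k_connected G k -> v \in vertices G -> k <= deg G v.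
Proof.
move=> hG kG vG; rewrite leqNgt; apply/negP => small.
pose S := [fset other v e | e in star G v].
have Sk : #|` S| < k by apply: leq_ltn_trans small; apply: leq_trans (leq_imfset_card _ _ _) _.
have SG : S `<=` vertices G.
  apply/fsubsetP=> x /imfsetP [e /=]; rewrite mem_star => /andP [eG _] ->.
  by rewrite /other; case: ifP => _; case/andP: (ends_vertices eG).
have other_in z : adj G v z -> z \in S.
  move=> /(adj_mkedge hG) vzG; apply/imfsetP; exists (mkedge v z).
    by rewrite mem_star vzG mkedge_touch.
  by rewrite other_mkedge.
have vS : v \notin S.
  by apply/imfsetP => -[e /= /(fsubsetP (star_sub G v)) /hG /(other_neq v) /eqP vx /esym].
have [w wS wv] : exists2 w, w \in vertices G `\` S & w != v.
  by apply: exists_other; rewrite cardfsDS //; case: kG => Gk _; lia.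
have vS' : v \in vertices G `\` S by rewrite in_fsetD vS.
have [|z /other_in zS] := k_connected_neighbor kG SG Sk vS' wS; first by rewrite eq_sym.
by rewrite zS.
Qed.

Lemma adj_del G v x y : adj G x y -> x != v -> y != v -> adj (del G v) x y.
Proof. by rewrite /adj !mem_del /= => /orP [] -> -> ->; rewrite ?orbT. Qed.

Lemma vertices_del G k v : is_graph G -> k_connected G k -> 1 < k -> v \in vertices G ->
  vertices (del G v) = vertices G `\ v.
Proof.
move=> hG kG k2 vG; apply/fsetP=> w; apply/idP/idP.
  case/mem_vertices=> e; rewrite mem_del => /andP [eG /andP [e1 e2]].
  by rewrite in_fsetD1; case/andP: (ends_vertices eG) => ? ? /orP [] /eqP ->; apply/andP.
rewrite in_fsetD1 => /andP [wv wG].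
have vS : [fset v] `<=` vertices G by rewrite fsub1set.
have [y yG yw] : exists2 y, y \in vertices G `\` [fset v] & y != w.
  by apply: exists_other; rewrite cardfsDS // cardfs1; case: kG => Gk _; lia.
have wG' : w \in vertices G `\` [fset v] by rewrite in_fsetD1 wv.
have [||z wz] := k_connected_neighbor kG vS _ wG' yG; rewrite ?cardfs1 1?[w == _]eq_sym //.
rewrite in_fset1 => zv; apply/mem_vertices; exists (mkedge w z).
  by apply: adj_mkedge (is_graph_sub hG (del_sub G v)) _; apply: adj_del.
by rewrite mkedge_ends eqxx.
Qed.

Lemma k_connected_del G k v : is_graph G -> k_connected G k -> 1 < k -> v \in vertices G ->
  k_connected (del G v) k.-1.
Proof.
move=> hG kG k2 vG; have Gv := vertices_del hG kG k2 vG.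
case: kG => Gk conn; split=> [|S]; first by rewrite Gv (cardfsD1 v) vG in Gk *; lia.
rewrite Gv => SGv Sk u w; rewrite !in_fsetD !in_fset1 => /and3P [uS uv uG] /and3P [wS wv wG].
have vSG : v |` S `<=` vertices G.
  by rewrite fsubUset fsub1set vG (fsubset_trans SGv) ?fsubsetDl.
have vSk : #|` v |` S| < k by rewrite cardfsU1; lia.
have [||p /andP [pth lastw]] := conn _ vSG vSk u w;
  rewrite ?in_fsetD ?in_fset1U ?negb_or ?uv ?uS ?wv ?wS //.
exists p; rewrite lastw andbT; elim: p u uv pth {uS uG lastw} => //= y p IH x xv.
by rewrite in_fset1U negb_or => /andP [/and3P [xy yv yS] /(IH y yv)]; rewrite adj_del ?yS.
Qed.

Lemma exists_common_vertex G k E1 E2 : is_graph G -> k_connected G k -> 0 < k ->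
  E1 `|` E2 = G -> E1 != fset0 -> E2 != fset0 ->
  exists v, 0 < #|` star E1 v| /\ 0 < #|` star E2 v|.
Proof.
move=> hG [_ conn] k0 E12 /fset0Pn [e1 e1E1] /fset0Pn [e2 e2E2].
have in_star E e x : e \in E -> (e.1 == x) || (e.2 == x) -> 0 < #|` star E x|.
  by move=> eE ex; rewrite cardfs_gt0; apply/fset0Pn; exists e; rewrite mem_star eE.
have end1G e : e \in G -> e.1 \in vertices G `\` fset0.
  by move/ends_vertices; rewrite in_fsetD in_fset0 => /andP [].
have [e1G e2G] : e1 \in G /\ e2 \in G by rewrite -E12 !in_fsetU e1E1 e2E2 orbT.
have [p /andP [pth /eqP lastp]] := conn _ (fsub0set _) k0 _ _ (end1G _ e1G) (end1G _ e2G).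
have : 0 < #|` star E1 e1.1| by apply: in_star e1E1 _; rewrite eqxx.
have : 0 < #|` star E2 (last e1.1 p)| by rewrite lastp; apply: in_star e2E2 _; rewrite eqxx.
elim: p e1.1 pth {lastp} => [|y p IH] x /=; first by exists x.
case/andP=> /andP [xy _] pth lastE2 xE1.
case: (posnP #|` star E2 x|) => [xE2|]; last by exists x.
apply: IH pth lastE2 _; move: (adj_mkedge hG xy); rewrite -E12 in_fsetU => /orP [xyE|xyE].
  by apply: in_star xyE _; rewrite mkedgeC mkedge_touch.
by have := in_star _ _ _ xyE (mkedge_touch x y); rewrite xE2.
Qed.

(** * Ranks of complete graphs *)

Lemma fset_bij (T : choiceType) (A B : {fset T}) : #|` A| = #|` B| ->
  exists f : T -> T, {in A &, injective f} /\ [fset f x | x in A] = B.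
Proof.
move=> AB; have sizeAB : size A = size B by [].
exists (fun x => nth x B (index x A)); split.
  move=> x y xA yA; rewrite [nth y _ _](set_nth_default x) -?sizeAB ?index_mem // => /eqP.
  rewrite nth_uniq ?fset_uniq -?sizeAB ?index_mem // => /eqP ixy.
  by rewrite -(nth_index x xA) ixy nth_index.
apply/fsetP=> y; apply/imfsetP/idP => [[x /= xA ->]|yB].
  by rewrite mem_nth // -sizeAB index_mem.
have iA : index y B < size A by rewrite sizeAB index_mem.
exists (nth y A (index y B)); first exact: mem_nth.
by rewrite index_uniq ?fset_uniq // (set_nth_default y) -?sizeAB // nth_index.
Qed.

Section CompleteGraphRank.
Variable rk : graph -> {fset edge} -> nat.
Hypothesis rk_family : graph_matroid_family rk.
Local Notation rK W := (rnk rk (complete W)).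

Lemma rk_matroid G : is_graph G -> matroid_rank G (rk G).
Proof. by case: rk_family => h _ _ hG; exact: (h G hG). Qed.

Lemma rk_complete_matroid V : matroid_rank (complete V) (rk (complete V)).
Proof. exact/rk_matroid/is_graph_complete. Qed.

Lemma rk_restrict G H X : is_graph G -> H `<=` G -> X `<=` H -> rk H X = rk G X.
Proof. by case: rk_family => _ _ h hG HG XH; exact: (h G H hG HG X XH). Qed.

Lemma rk_completeE V W : W `<=` V -> rk (complete V) (complete W) = rK W.
Proof.
move=> WV; rewrite /rnk (@rk_restrict (complete V) (complete W) (complete W)) //.
exact: is_graph_complete.
exact: completeS.
Qed.

Lemma rK_mono W V : W `<=` V -> rK W <= rK V.
Proof.
move=> WV; rewrite -(rk_completeE WV) /rnk.
exact: (rankS (@rk_complete_matroid V) (fsubset_refl (complete V)) (completeS WV)).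
Qed.

Lemma rK_card W V : #|` W| = #|` V| -> rK W = rK V.
Proof.
case/fset_bij=> f [f_inj fWV]; have iso : graph_iso f (complete W) (complete V).
  have VW := fsubsetP (vertices_sub (fsubset_refl (complete W))).
  split; first by move=> x y /VW xW /VW yW; apply: f_inj.
  by rewrite -fWV; apply: imfset_complete.
case: rk_family => _ rk_iso _; rewrite /rnk -{2}(proj2 iso) (rk_iso _ _ _ _ _ iso) //;
  exact: is_graph_complete.
Qed.

Lemma rank_transp V p q X : p \in V -> q \in V -> X `<=` complete V ->
  rk (complete V) [fset emap (transp p q) e | e in X] = rk (complete V) X.
Proof.
move=> pV qV XV; case: rk_family => _ rk_iso _.
apply: rk_iso => //; try exact: is_graph_complete.
split; first by move=> x y _ _; apply: transp_inj.
by rewrite imfset_complete ?imfset_transp // => x y _ _; apply: transp_inj.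
Qed.
End CompleteGraphRank.

Lemma mem_star_complete V v e : v \in V -> e \in star (complete V) v ->
  exists2 x, x \in V `\ v & e = mkedge v x.
Proof. by move=> vV; rewrite star_complete // => /imfsetP. Qed.

Lemma emap_transp_mkedge p q v x : v != p -> v != q ->
  emap (transp p q) (mkedge v x) = mkedge v (transp p q x).
Proof. by move=> vp vq; rewrite emap_mkedge transp_id. Qed.

Lemma imfset_transp_star V v p q Z : v \in V -> Z `<=` star (complete V) v ->
  p \in V `\ v -> q \in V `\ v -> mkedge v p \in Z -> mkedge v q \notin Z ->
  [fset emap (transp p q) e | e in Z] = mkedge v q |` (Z `\ mkedge v p).
Proof.
move=> vV /fsubsetP Zv; rewrite !in_fsetD1 => /andP [pv _] /andP [qv _] pZ qZ.
have [vp vq] : v != p /\ v != q by rewrite ![v == _]eq_sym.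
have neq_p x : mkedge v x != mkedge v p -> x != p by apply: contraNneq => ->.
have neq_q x : mkedge v x \in Z -> x != q by apply: contraTneq => ->.
apply/fsetP=> e; rewrite in_fset1U in_fsetD1; apply/imfsetP/idP => [[e0 /= e0Z ->]|].
  have [x _ e0x] := mem_star_complete vV (Zv _ e0Z); rewrite e0x in e0Z *.
  rewrite emap_transp_mkedge //; case: (eqVneq x p) => [->|xp]; first by rewrite transpL eqxx.
  rewrite transp_id ?neq_q // e0Z andbT; apply/orP; right.
  by apply: contra_neq xp => /mkedge_inj.
case/orP => [/eqP ->|/andP [ep eZ]].
  by exists (mkedge v p); rewrite //= emap_transp_mkedge ?transpL.
have [x _ ex] := mem_star_complete vV (Zv _ eZ); rewrite ex in ep eZ *.
exists (mkedge v x); rewrite // emap_transp_mkedge // transp_id //; first exact: neq_p.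
exact: neq_q.
Qed.

Section StarDichotomy.
Variable rk : graph -> {fset edge} -> nat.
Hypothesis rk_family : graph_matroid_family rk.
Variable V : {fset nat}.
Local Notation r := (rk (complete V)).
Let r_matroid := @rk_complete_matroid rk rk_family V.

Lemma rank_star_dichotomy v Z : v \in V -> Z `<=` star (complete V) v ->
  r (complete (V `\ v) `|` Z) = r (complete (V `\ v)) + #|` Z| \/
  r (complete (V `\ v) `|` Z) = rnk rk (complete V).
Proof.
move=> vV Zv; set A := complete (V `\ v).
have AV : A `<=` complete V by apply/completeS/fsubsetDl.
have starV := star_sub (complete V) v; have ZV := fsubset_trans Zv starV.
have AZV : A `|` Z `<=` complete V by rewrite fsubUset AV.
case: (ltnP (r (A `|` Z)) (r A + #|` Z|)) => [dep|indep]; last first.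
  by left; apply/eqP; rewrite eqn_leq indep (rankU_leq r_matroid).
right; have [z zZ span_z] := rankU_redundant r_matroid AV ZV dep.
set B := A `|` (Z `\ z).
have BAZ : B `<=` A `|` Z by rewrite fsetUS ?fsubsetDl.
have BV := fsubset_trans BAZ AZV.
have spans y : y \in star (complete V) v -> r (B `|` [fset y]) = r B.
  move=> yv; have ByV : B `|` [fset y] `<=` complete V.
    by rewrite fsubUset BV fsub1set (fsubsetP starV).
  apply/eqP; rewrite eqn_leq (rankS r_matroid ByV (fsubsetUl _ _)) andbT /B span_z.
  case: (boolP (y \in Z)) => [yZ|yZ].
    by apply: (rankS r_matroid); rewrite // fsubUset BAZ fsub1set in_fsetU yZ orbT.
  (* The transposition of p and q fixes K_(V-v) and moves the spoke z = vp to y = vq. *)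
  have [p pV zp] := mem_star_complete vV (fsubsetP Zv _ zZ).
  have [q qV yq] := mem_star_complete vV yv.
  have pq_star := imfset_transp_star vV Zv pV qV.
  have [pV' qV'] : p \in V /\ q \in V.
    by move: pV qV; rewrite !in_fsetD1 => /andP [_ ->] /andP [_ ->].
  rewrite -(rank_transp rk_family pV' qV' AZV).
  rewrite imfsetU pq_star -?zp -?yq // imfset_complete ?imfset_transp //;
    last by move=> ? ? _ _; apply: transp_inj.
  by rewrite [_ `|` [fset y]]fsetUC fsetUCA.
have := rank_spanned r_matroid BV starV spans.
have KV : complete V `<=` B `|` star (complete V) v.
  by rewrite -{1}(fsetU_del_star (complete V) v) del_complete fsetSU ?fsubsetUl.
have := rankS r_matroid (fsubset_refl _) AZV; have := rankS r_matroid _ KV.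
rewrite fsubUset BV starV /B span_z /rnk; lia.
Qed.
End StarDichotomy.

Lemma exists_fsubset_card (T : choiceType) (U : {fset T}) k : k <= #|` U| ->
  exists2 Y : {fset T}, Y `<=` U & #|` Y| = k.
Proof.
elim: k => [|k IH] kU; first by exists fset0; rewrite ?fsub0set ?cardfs0.
have [Y YU cardY] := IH (ltnW kU); have /fsubsetPn [y yU yY] : ~~ (U `<=` Y).
  by apply: contraTN kU => /fsubset_leq_card; rewrite cardY -ltnNge.
by exists (y |` Y); rewrite ?fsubUset ?fsub1set ?yU // cardfsU1 yY cardY.
Qed.

Lemma exists_fsubset_card_mem (T : choiceType) (U : {fset T}) x k :
  x \in U -> 0 < k <= #|` U| ->
  exists2 Y : {fset T}, Y `<=` U & x \in Y /\ #|` Y| = k.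
Proof.
move=> xU /andP [k0 kU]; have [|Y YU cardY] := @exists_fsubset_card _ (U `\ x) k.-1.
  by rewrite (cardfsD1 x) xU in kU; lia.
have xY : x \notin Y by apply/negP => /(fsubsetP YU); rewrite fsetD11.
exists (x |` Y); last by rewrite fset1U1 cardfsU1 xY cardY; split=> //; lia.
by rewrite fsubUset fsub1set xU (fsubset_trans YU) ?fsubsetDl.
Qed.

Lemma mem_iota_fset n i : (i \in [fset j | j in iota 0 n]) = (i < n).
Proof. by rewrite in_fset /= mem_iota. Qed.

Lemma card_iota_fset n : #|` [fset j | j in iota 0 n]| = n.
Proof. by rewrite card_fseq undup_id ?iota_uniq ?size_iota. Qed.

Lemma iota_fsetS n : [fset j | j in iota 0 n.+1] = n |` [fset j | j in iota 0 n].
Proof. by apply/fsetP=> i; rewrite in_fset1U !mem_iota_fset ltnS leq_eqVlt. Qed.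

Section Unbounded.
Variable rk : graph -> {fset edge} -> nat.
Hypothesis rk_family : graph_matroid_family rk.
Hypothesis rk_unbounded : unbounded rk.
Local Notation rK W := (rnk rk (complete W)).

Lemma rK_flat_extend W u U u' : u \notin W -> 0 < #|` W| -> rK (u |` W) = rK W ->
  u' \notin U -> #|` W| <= #|` U| -> rK (u' |` U) = rK U.
Proof.
move=> uW W0 flatW u'U WU; set V := u' |` U.
have r_matroid := @rk_complete_matroid rk rk_family V.
have UV : U `<=` V := fsubsetU1 u' U; have KUV := completeS UV.
have starV := star_sub (complete V) u'.
have spans y : y \in star (complete V) u' ->
    rk (complete V) (complete U `|` [fset y]) = rk (complete V) (complete U).
  move=> /(mem_star_complete (fset1U1 u' U)) [x]; rewrite fsetU1K // => xU ->.
  have [W' W'U [xW' cardW']] := exists_fsubset_card_mem xU (introT andP (conj W0 WU)).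
  have u'W' : u' \notin W' by apply: contraNN u'U => /(fsubsetP W'U).
  have flatW' : rK (u' |` W') = rK W'.
    have cardW'u : #|` u' |` W'| = #|` u |` W| by rewrite !cardfsU1 uW u'W' cardW'.
    by rewrite (rK_card rk_family cardW'u) flatW (rK_card rk_family cardW').
  have W'V : u' |` W' `<=` V by apply: fsetUS.
  have yW' : [fset mkedge u' x] `<=` complete (u' |` W').
    by rewrite fsub1set mkedge_complete fset1U1 fset1Ur //; apply: contraNneq u'U => ->.
  have W'yW' : complete W' `|` [fset mkedge u' x] `<=` complete (u' |` W').
    by rewrite fsubUset yW' completeS ?fsubsetU1.
  have UyV : complete U `|` [fset mkedge u' x] `<=` complete V.
    by rewrite fsubUset KUV (fsubset_trans yW') ?completeS.
  have yV := fsubset_trans yW' (completeS W'V).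
  have dim := rankU_diminishing r_matroid KUV yV (completeS W'U).
  have flat := rankS r_matroid (completeS W'V) W'yW'.
  rewrite (rk_completeE rk_family W'V) flatW' in flat.
  rewrite -(rk_completeE rk_family (fsubset_trans W'U UV)) in flat.
  apply/eqP; rewrite eqn_leq (rankS r_matroid UyV (fsubsetUl _ _)) andbT.
  rewrite -(leq_add2r (rk (complete V) (complete W'))); apply: leq_trans dim _.
  by rewrite addnC leq_add2l.
have := rank_spanned r_matroid KUV starV spans.
rewrite rk_completeE // => <-.
by rewrite /rnk -{2}(fsetU_del_star (complete V) u') del_complete fsetU1K.
Qed.

Lemma rK_del_lt V v : v \in V -> 1 < #|` V| -> rK (V `\ v) < rK V.
Proof.
move=> vV V2; rewrite ltnNge; apply/negP => flat.
set W := V `\ v; pose n := #|` W|; pose I m := [fset j | j in iota 0 m].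
have flatW : rK (v |` W) = rK W.
  by apply/eqP; rewrite fsetD1K // eqn_leq flat rK_mono ?fsubsetDl.
have W0 : 0 < n by rewrite (cardfsD1 v) vV add1n ltnS in V2.
have flat_from_n m : rK (I (n + m)) = rK (I n).
  elim: m => [|m IH]; first by rewrite addn0.
  rewrite addnS /I iota_fsetS (rK_flat_extend _ W0 flatW) ?fsetD11 ?mem_iota_fset ?ltnn //.
  by rewrite card_iota_fset leq_addr.
have [m big] := rk_unbounded (rK (I n)); have {}big : rK (I n) < rK (I m) := big.
case: (leqP n m) => [nm|mn]; first by move: big; rewrite -(subnKC nm) flat_from_n ltnn.
have : rK (I m) <= rK (I n).
  by apply: rK_mono => //; apply/fsubsetP=> i; rewrite !mem_iota_fset => /ltn_trans; apply.
by move/(leq_trans big); rewrite ltnn.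
Qed.
End Unbounded.

Section StarRank.
Variable rk : graph -> {fset edge} -> nat.
Hypothesis rk_family : graph_matroid_family rk.
Hypothesis rk_unbounded : unbounded rk.
Variable V : {fset nat}.
Local Notation r := (rk (complete V)).
Local Notation rK W := (rnk rk (complete W)).
Let r_matroid := @rk_complete_matroid rk rk_family V.

Lemma rank_star_nonloop x e : x \in V -> e \in star (complete V) x ->
  r (complete (V `\ x)) < r (complete (V `\ x) `|` [fset e]).
Proof.
move=> xV ex; have [y yV _] := mem_star_complete xV ex.
have V2 : 1 < #|` V| by rewrite (cardfsD1 x) xV add1n ltnS cardfs_gt0; apply/fset0Pn; exists y.
have := rK_del_lt rk_family rk_unbounded xV V2.
rewrite -(rk_completeE rk_family (fsubsetDl _ _)).
have ex' : [fset e] `<=` star (complete V) x by rewrite fsub1set.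
case: (rank_star_dichotomy rk_family xV ex') => ->.
  by rewrite cardfs1 addn1.
by [].
Qed.

Lemma rank_star_free v X : v \in V -> X `<=` star (complete V) v -> r X = #|` X|.
Proof.
move=> vV Xv; have XV := fsubset_trans Xv (star_sub _ _).
apply/eqP; rewrite eqn_leq (rank_leq_card r_matroid) //= leqNgt; apply/negP => dep.
have [|e eX span_e] := rankU_redundant r_matroid (fsub0set _) XV.
  by rewrite fset0U (rank0 r_matroid).
rewrite !fset0U in span_e.
have [x xV ex] := mem_star_complete vV (fsubsetP Xv _ eX).
have [xv {}xV] : x != v /\ x \in V by apply/andP; rewrite -in_fsetD1.
have ex_star : e \in star (complete V) x.
  by rewrite ex mkedgeC star_complete // in_imfset // in_fsetD1 eq_sym xv.
have Xe_del : X `\ e `<=` complete (V `\ x).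
  apply/fsubsetP=> f; rewrite in_fsetD1 => /andP [fe fX].
  have [y yV fy] := mem_star_complete vV (fsubsetP Xv _ fX).
  move: yV; rewrite fy mkedge_complete !in_fsetD1 => /andP [yv ->].
  rewrite [v == x]eq_sym xv vV [v == y]eq_sym yv !andbT.
  by apply: contra_neq fe => yx; rewrite fy ex yx.
have eV : [fset e] `<=` complete V by rewrite fsub1set (fsubsetP XV).
have := rankU_diminishing r_matroid (completeS (fsubsetDl V [fset x])) eV Xe_del.
have := rank_star_nonloop xV ex_star.
by rewrite [X `\ e `|` _]fsetUC fsetD1K // span_e; lia.
Qed.

Lemma card_star_leq_rank v E : v \in V -> E `<=` complete V -> #|` star E v| <= r E.
Proof.
move=> vV EV; rewrite -(rank_star_free vV (starS v EV)).
exact: (rankS r_matroid EV (star_sub E v)).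
Qed.

Lemma rank_del_star v E : v \in V -> E `<=` complete V ->
  r (del E v) + #|` star E v| <= r E \/ r (del E v) + rK V <= r E + rK (V `\ v).
Proof.
move=> vV EV; have Zv := starS v EV; have ZV := fsubset_trans Zv (star_sub _ _).
have AV : complete (V `\ v) `<=` complete V by apply/completeS/fsubsetDl.
have delA : del E v `<=` complete (V `\ v) by rewrite -del_complete; apply: delS.
have := rankU_diminishing r_matroid AV ZV delA; rewrite fsetU_del_star.
rewrite -(rk_completeE rk_family (fsubsetDl V [fset v])).
by case: (rank_star_dichotomy rk_family vV Zv) => ->; [left|right]; lia.
Qed.
End StarRank.

Section StarExtension.
Variables (V : {fset nat}) (v : nat) (Z : {fset edge}).
Hypotheses (vV : v \in V) (Zv : Z `<=` star (complete V) v).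
Local Notation H := (complete (V `\ v) `|` Z).

Lemma star_extension_hub S : #|` S| < #|` Z| ->
  exists2 x, x \in V `\ v `\` S & forall y, y \in V -> y != x -> adj H x y.
Proof.
move=> SZ; have /fsubsetPn [z zZ zS] : ~~ (Z `<=` spokes v S).
  by apply: contraTN SZ => /fsubset_leq_card; rewrite card_spokes leqNgt.
have [x xVv zx] := mem_star_complete vV (fsubsetP Zv _ zZ).
have [xv xV] : x != v /\ x \in V by apply/andP; rewrite -in_fsetD1.
exists x => [|y yV yx].
  by rewrite in_fsetD xVv andbT; apply: contraNN zS => xS; rewrite zx in_imfset.
apply: mkedge_adj; rewrite in_fsetU; case: (eqVneq y v) => [->|yv].
  by rewrite mkedgeC -zx zZ orbT.
by rewrite mkedge_complete !in_fsetD1 xv xV yv yV eq_sym yx.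
Qed.

Lemma vertices_star_extension : 0 < #|` Z| -> vertices H = V.
Proof.
move=> Z0; apply/eqP; rewrite eqEfsubset vertices_sub ?fsubUset ?completeS ?fsubsetDl //=;
  last exact: fsubset_trans Zv (star_sub _ _).
have [x] := @star_extension_hub fset0 Z0; rewrite in_fsetD in_fsetD1 => /and3P [_ xv xV] x_adj.
apply/fsubsetP=> y yV; case: (eqVneq y x) => [->|yx].
  by apply: (@adj_vertices _ _ v); apply: x_adj; rewrite // eq_sym.
by have := x_adj y yV yx; rewrite adjC => /adj_vertices.
Qed.

Lemma k_connected_star_extension k : 0 < k <= #|` Z| -> k < #|` V| -> k_connected H k.
Proof.
case/andP=> k0 kZ Vk; have HV := vertices_star_extension (leq_trans k0 kZ).
apply: k_connected_hub; rewrite HV // => S _ Sk.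
have [x] := star_extension_hub (leq_trans Sk kZ).
rewrite !in_fsetD => /andP [xS /andP [_ xV]] x_adj.
exists x => [|y]; first by rewrite in_fsetD xS.
by rewrite in_fsetD => /andP [_ yV]; apply: x_adj.
Qed.
End StarExtension.

(** * Vertical connectivity *)

Lemma vertical_separationE rk G V j : graph_matroid_family rk -> G `<=` complete V ->
  vertical_separation rk G j <->
  exists E1 E2 : {fset edge}, [/\ E1 `|` E2 = G, E1 `&` E2 = fset0,
    j <= rk (complete V) E1, j <= rk (complete V) E2 &
    rk (complete V) E1 + rk (complete V) E2 <= rk (complete V) G + j - 1].
Proof.
move=> rk_family GV; have rkE X : X `<=` G -> rk G X = rk (complete V) X.
  by move=> XG; rewrite (rk_restrict rk_family (@is_graph_complete V) GV XG).
split=> -[E1 [E2 [E12 I12]]].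
all: have [E1G E2G] : E1 `<=` G /\ E2 `<=` G by rewrite -E12 fsubsetUl fsubsetUr.
  by rewrite !rkE //; exists E1, E2.
by rewrite -!rkE //; exists E1, E2.
Qed.

Section LovaszYemini.
Variables (rk : graph -> {fset edge} -> nat) (c : nat).
Hypotheses (rk_family : graph_matroid_family rk) (rk_unbounded : unbounded rk).
Hypotheses (rk_LY : lovasz_yemini rk c) (c_gt0 : 0 < c).
Local Notation rK W := (rnk rk (complete W)).

Lemma rigid_rank G V : is_graph G -> G `<=` complete V -> k_connected G c ->
  rk (complete V) G = rK (vertices G).
Proof.
move=> hG GV kG; have := rk_LY hG kG; rewrite /rigid /rnk => <-.
by rewrite (rk_restrict rk_family (@is_graph_complete V) GV).
Qed.

Lemma rK_leq_del_add V v : v \in V -> c < #|` V| -> rK V <= rK (V `\ v) + c.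
Proof.
move=> vV cV; have [Z Zv cardZ] : exists2 Z, Z `<=` star (complete V) v & #|` Z| = c.
  apply: (@exists_fsubset_card _ (star (complete V) v)).
  rewrite (star_complete vV) card_spokes.
  by rewrite (cardfsD1 v) vV add1n ltnS in cV.
have HV : complete (V `\ v) `|` Z `<=` complete V.
  by rewrite fsubUset completeS ?fsubsetDl // (fsubset_trans Zv) ?star_sub.
have kH : k_connected (complete (V `\ v) `|` Z) c.
  by apply: (k_connected_star_extension vV Zv) => //; rewrite cardZ c_gt0 leqnn.
have := rigid_rank (is_graph_sub (@is_graph_complete V) HV) HV kH.
rewrite vertices_star_extension ?cardZ // => <-.
rewrite -(rk_completeE rk_family (fsubsetDl V [fset v])) -cardZ.
have ZV := fsubset_trans Zv (star_sub _ _).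
exact: (rankU_leq (@rk_complete_matroid rk rk_family V) (completeS (fsubsetDl _ _)) ZV).
Qed.

Section VertexDeletion.
Variables (G : graph) (j : nat).
Hypotheses (j_gt0 : 0 < j) (hG : is_graph G) (kG : k_connected G (c + j)).
Local Notation V := (vertices G).
Local Notation r := (rk (complete (vertices G))).
Let GV : G `<=` complete V := sub_complete_vertices hG.
Let r_matroid := @rk_complete_matroid rk rk_family V.
Let k2 : 1 < c + j := leq_add c_gt0 j_gt0.

Lemma exists_split_vertex E1 E2 : E1 `|` E2 = G -> 0 < r E1 -> 0 < r E2 ->
  exists2 v, v \in V & 0 < #|` star E1 v| /\ 0 < #|` star E2 v|.
Proof.
move=> E12 rE1 rE2; have nonempty E : 0 < r E -> E != fset0.
  by apply: contraTneq => ->; rewrite (rank0 r_matroid).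
have [v [star1 star2]] :=
  exists_common_vertex hG kG (ltnW k2) E12 (nonempty _ rE1) (nonempty _ rE2).
exists v => //; apply/star_vertices/(leq_trans star1)/fsubset_leq_card/starS.
by rewrite -E12 fsubsetUl.
Qed.

Lemma rank_vertex_deletion v : v \in V ->
  [/\ r G = rK V, r (del G v) = rK (V `\ v), rK (V `\ v) < rK V & rK V <= rK (V `\ v) + c].
Proof.
move=> vV; have [Vcj _] := kG; split.
- exact: rigid_rank hG GV (k_connectedW kG (leq_addr j c)).
- rewrite -(vertices_del hG kG k2 vV).
  apply: rigid_rank (k_connectedW (k_connected_del hG kG k2 vV) _) => //; last by lia.
    exact: is_graph_sub hG (del_sub G v).
  exact: fsubset_trans (del_sub G v) GV.
- exact: (rK_del_lt rk_family rk_unbounded vV (ltnW (leq_ltn_trans k2 Vcj))).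
- exact: (rK_leq_del_add vV (leq_ltn_trans (leq_addr j c) Vcj)).
Qed.

Lemma vertical_separation_del : vertical_separation rk G j ->
  exists2 v, v \in V & exists2 j', 0 < j' < j & vertical_separation rk (del G v) j'.
Proof.
case/(vertical_separationE j rk_family GV) => E1 [E2 [E12 I12 j1 j2 sepG]].
have [E1G E2G] : E1 `<=` G /\ E2 `<=` G by rewrite -E12 fsubsetUl fsubsetUr.
have [E1V E2V] := conj (fsubset_trans E1G GV) (fsubset_trans E2G GV).
have [v vV [star1 star2]] := exists_split_vertex E12 (leq_trans j_gt0 j1) (leq_trans j_gt0 j2).
have [rG rGv growV boundV] := rank_vertex_deletion vV.
have degv : c + j <= #|` star E1 v| + #|` star E2 v|.
  rewrite (leq_trans (k_connected_deg hG kG vV)) //.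
  by rewrite -E12 /deg -/(star _ v) starU leq_card_fsetU.
have free1 := card_star_leq_rank rk_family rk_unbounded vV E1V.
have free2 := card_star_leq_rank rk_family rk_unbounded vV E2V.
have side1 := rank_del_star rk_family vV E1V; have side2 := rank_del_star rk_family vV E2V.
have GvV : del G v `<=` complete V := fsubset_trans (del_sub G v) GV.
have D12 : del E1 v `|` del E2 v = del G v by rewrite -delU E12.
have D1V : del E1 v `<=` complete V := fsubset_trans (delS v E1G) GvV.
have D2V : del E2 v `<=` complete V := fsubset_trans (delS v E2G) GvV.
have submod : r (del G v) <= r (del E1 v) + r (del E2 v).
  by rewrite -D12; apply: leq_trans (rank_submod r_matroid D1V D2V); apply: leq_addr.
have del1 : r (del E1 v) <= r (del G v) := rankS r_matroid GvV (delS v E1G).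
have del2 : r (del E2 v) <= r (del G v) := rankS r_matroid GvV (delS v E2G).
(* Neither remainder spans K_(V-v): if E2 - v did, E2 would have rank at least
   r(G) or r(K_(V-v)) + deg_(E2) v, and either breaks the separation.  The value
   of j' makes r(E1 - v) + r(E2 - v) = r(G - v) + j' - 1. *)
exists v => //; exists (r (del E1 v) + r (del E2 v) + 1 - rK (V `\ v)).
  by case: side1; case: side2; lia.
apply/(vertical_separationE _ rk_family GvV); exists (del E1 v), (del E2 v).
by rewrite D12 -delI I12 del0; split=> //; case: side1; case: side2; lia.
Qed.
End VertexDeletion.

Lemma no_vertical_separation G j : 0 < j -> is_graph G -> k_connected G (c + j) ->
  ~ vertical_separation rk G j.
Proof.
elim/ltn_ind: j G => j IH G j0 hG kG.
case/(vertical_separation_del j0 hG kG) => v vG [j' /andP [j'0 j'j] sep'].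
have k2 : 1 < c + j := leq_add c_gt0 j0.
apply: IH sep' => //; first exact: is_graph_sub hG (del_sub G v).
by apply: k_connectedW (k_connected_del hG kG k2 vG) _; lia.
Qed.
End LovaszYemini.

Lemma lovasz_yeminiW rk c c' : lovasz_yemini rk c -> c <= c' -> lovasz_yemini rk c'.
Proof. by move=> LY cc' G hG kG; apply/LY/(k_connectedW kG). Qed.

Lemma circuit_vertices rk C : circuit rk C -> 1 < #|` vertices C|.
Proof.
case=> hC rC _; have /fset0Pn [e eC] : C != fset0 by rewrite -cardfs_gt0; lia.
have /andP [e1 e2] := ends_vertices eC.
have ends : [fset e.1; e.2] `<=` vertices C by rewrite fsubUset !fsub1set e1.
by have := fsubset_leq_card ends; rewrite cardfs2 (ltn_eqF (hC e eC)).
Qed.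

Lemma deg_leq_rank rk G v : graph_matroid_family rk -> unbounded rk ->
  is_graph G -> v \in vertices G -> deg G v <= rk G G.
Proof.
move=> rk_family rk_unbounded hG vG; have GV := sub_complete_vertices hG.
rewrite (rk_restrict rk_family (@is_graph_complete (vertices G)) GV) //.
exact: (card_star_leq_rank rk_family rk_unbounded vG GV).
Qed.

Theorem proposition3p7 (rk : graph -> {fset edge} -> nat) (d t c k : nat)
  (G : graph) :
  graph_matroid_family rk -> nontrivial rk -> unbounded rk ->
  dimensionality rk d -> threshold rk d t -> lovasz_yemini rk c ->
  is_graph G -> 0 < k -> k_connected G (maxn t c + k) ->
  vertically_connected rk G k.+1.
Proof.
(* The Lovasz-Yemini
   constant c may be 0, but a threshold circuit has at least two vertices, so
   maxn c 1 <= maxn t c. *)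
move=> rk_family _ rk_unbounded _ [[C [circuitC _ cardC]] _] LY hG k0 kG.
have t0 : 0 < t by have := circuit_vertices circuitC; rewrite cardC.
have LY1 := lovasz_yeminiW LY (leq_maxl c 1).
have {}kG : k_connected G (maxn c 1 + k).
  by apply: k_connectedW kG _; lia.
split=> [|k' k'0 k'k].
  have [v vG] : exists v, v \in vertices G.
    by case: kG => /(leq_ltn_trans (leq0n _)); rewrite cardfs_gt0 => /fset0Pn.
  apply: leq_trans (deg_leq_rank rk_family rk_unbounded hG vG).
  by apply: leq_trans (k_connected_deg hG kG vG); lia.
apply: (no_vertical_separation rk_family rk_unbounded LY1 (leq_maxr c 1) k'0 hG).
by apply: k_connectedW kG _; lia.
Qed.
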